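(* Let $n,k_1,k_2$ be nonnegative integers with $k_1+k_2\le n$ and $\ell=n-k_1-k_2$. If $G\in\mathcal{S}$, then there is a matrix $G'\in\mathcal{T}$ such that the $\mathbb{Z}_4$-codes with generator matrices $G$ and $G'$ are equivalent.
   Context: $\mathbb{Z}_4=\{0,1,2,3\}$ is the ring of integers modulo $4$; a $\mathbb{Z}_4$-code of length $n$ is a submodule of $\mathbb{Z}_4^n$, and two codes are equivalent if one is obtained from the other by permuting coordinates and changing the signs of some coordinates. Order $\mathbb{Z}_4$ by $0<1<2<3$ and order vectors of $\mathbb{Z}_4^m$ lexicographically (compare first differing coordinate). Let $M_{m\times n}(R)$ denote the set of $m\times n$ matrices with entries in $R$. For $T\subset M_{m\times n}(\mathbb{Z}_4)$ let $P_{row}(T)$ be the set of matrices in $T$ whose rows $a_1,\dots,a_m$ satisfy $a_i\le a_j$ whenever $i\le j$. For $(0,1)$-matrices $A$ ($k_1\times k_2$), $D$ ($k_2\times\ell$) and a $\mathbb{Z}_4$-matrix $B$ ($k_1\times\ell$), let $G(A,B,D)=\begin{pmatrix} I_{k_1} & A & B\\ O & 2I_{k_2} & 2D\end{pmatrix}$ (a $\mathbb{Z}_4$-matrix, $I_k$ identity, $O$ zero matrix). Let $\mathcal{S}=\{G(A,B,D)\mid A\in M_{k_1\times k_2}(\{0,1\}),\ B\in M_{k_1\times\ell}(\mathbb{Z}_4),\ D\in M_{k_2\times\ell}(\{0,1\})\}$ and $\mathcal{T}=\{G(A,B,D)\in\mathcal{S}\mid A\in P_{row}(M_{k_1\times k_2}(\{0,1\}))\}$.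 *)

From mathcomp Require Import all_boot all_order all_algebra.
From mathcomp Require Import fingroup perm.
Set Implicit Arguments. Unset Strict Implicit. Unset Printing Implicit Defensive.
Import GRing.Theory.
Local Open Scope ring_scope.

(* Z_4 is 'Z_4 (convertible to 'I_4); the order 0<1<2<3 is that of the
   underlying natural numbers. *)
Notation Z4 := 'Z_4.

Definition is01 (m n : nat) (M : 'M[Z4]_(m, n)) : bool :=
  [forall i, forall j, (M i j == 0) || (M i j == 1)].

Fixpoint lexle (s t : seq nat) : bool :=
  match s, t with
  | [::], _ => true
  | _ :: _, [::] => false
  | x :: s', y :: t' => (x < y)%N || ((x == y) && lexle s' t')
  end.

Definition rowseq (m n : nat) (M : 'M[Z4]_(m, n)) (i : 'I_m) : seq nat :=
  [seq nat_of_ord (M i j) | j <- enum 'I_n].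

Definition P_row (m n : nat) (M : 'M[Z4]_(m, n)) : bool :=
  [forall i : 'I_m, forall j : 'I_m, (i <= j)%N ==> lexle (rowseq M i) (rowseq M j)].

(* G(A,B,D) = [ I_{k1}  A      B  ]
              [ O       2I_{k2} 2D ]   with n = k1 + k2 + l columns *)
Definition GABD (k1 k2 l : nat) (A : 'M[Z4]_(k1, k2)) (B : 'M[Z4]_(k1, l))
  (D : 'M[Z4]_(k2, l)) : 'M[Z4]_(k1 + k2, k1 + k2 + l) :=
  block_mx (row_mx 1%:M A) B (row_mx 0 (2%:R)%:M) (2%:R *: D).

Definition code (m n : nat) (G : 'M[Z4]_(m, n)) : {set 'rV[Z4]_n} :=
  [set x | [exists v : 'rV[Z4]_m, x == v *m G]].

Definition equiv_code (n : nat) (C1 C2 : {set 'rV[Z4]_n}) : Prop :=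
  exists (s : 'S_n) (e : 'I_n -> bool),
    C2 = [set \row_j ((-1) ^+ e j * x 0 (s j)) | x : 'rV[Z4]_n in C1].

From mathcomp Require Import all_boot all_order all_algebra.
From mathcomp Require Import fingroup perm.
Set Implicit Arguments. Unset Strict Implicit. Unset Printing Implicit Defensive.
Import GRing.Theory.
Local Open Scope ring_scope.

(* Sort the rows of A lexicographically, carrying the rows of I and B along;
   the resulting row permutation of [I A B] destroys the identity block, which
   is restored by the same permutation of the first k1 coordinates.  Row
   permutations do not change the code, and coordinate permutations give an
   equivalent one. *)

Lemma lexle_total : total lexle.
Proof.
elim=> [|x s IH] [|y t] //=.
case: (ltngtP x y) => // _; rewrite ?orbT //.
by move: (IH t); case: (lexle s t); case: (lexle t s).
Qed.

Lemma lexle_trans : transitive lexle.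
Proof.
move=> t s; elim: s t => [|x s IH] [|y t] [|z u] //=.
case/orP=> [xy|/andP[/eqP-> st]]; case/orP=> [yz|/andP[/eqP<- tu]].
- by rewrite (ltn_trans xy yz).
- by rewrite xy.
- by rewrite yz.
- by rewrite eqxx (IH _ _ st tu) orbT.
Qed.

Lemma sorting_perm k (r : rel 'I_k) : transitive r -> total r ->
  exists p : 'S_k, forall i j : 'I_k, (i <= j)%N -> r (p i) (p j).
Proof.
move=> r_tr r_tot; have r_refl : reflexive r by move=> i; rewrite -[r i i]orbb.
pose s := sort r (enum 'I_k).
have size_s : size s = k by rewrite size_sort size_enum_ord.
have nth_s (i j : 'I_k) : nth i s i = nth j s i.
  by apply: set_nth_default; rewrite size_s.
have f_inj : injective (fun i => nth i s i).
  move=> i j; rewrite (nth_s i j) => /eqP.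
  rewrite nth_uniq ?size_s ?sort_uniq ?enum_uniq // => /eqP; exact: val_inj.
exists (perm f_inj) => i j ij; rewrite !permE (nth_s i j).
by apply: (sorted_leq_nth r_tr r_refl) => //; rewrite ?inE ?size_s ?sort_sorted.
Qed.

Lemma sort_rows m n (M : 'M[Z4]_(m, n)) : exists p : 'S_m, P_row (row_perm p M).
Proof.
have [p p_sorted] :=
  @sorting_perm m (fun i j => lexle (rowseq M i) (rowseq M j))
    (fun _ _ _ => @lexle_trans _ _ _) (fun _ _ => lexle_total _ _).
exists p; apply/forallP=> i; apply/forallP=> j; apply/implyP=> ij.
have rowseq_perm x : rowseq (row_perm p M) x = rowseq M (p x).
  by apply: eq_map => y; rewrite mxE.
by rewrite !rowseq_perm p_sorted.
Qed.

Lemma is01_row_perm m n (p : 'S_m) (M : 'M[Z4]_(m, n)) :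
  is01 M -> is01 (row_perm p M).
Proof.
move=> /forallP M01; apply/forallP=> i; apply/forallP=> j.
by rewrite mxE; move/forallP: (M01 (p i)).
Qed.

Lemma code_mulmx_sub m m' n (M : 'M[Z4]_(m', m)) (G : 'M[Z4]_(m, n)) :
  code (M *m G) \subset code G.
Proof.
apply/subsetP=> x; rewrite !inE => /existsP[v /eqP->].
by apply/existsP; exists (v *m M); rewrite mulmxA.
Qed.

Lemma code_row_perm m n (s : 'S_m) (G : 'M[Z4]_(m, n)) :
  code (row_perm s G) = code G.
Proof.
apply/eqP; rewrite eqEsubset; apply/andP; split.
  by rewrite row_permE; apply: code_mulmx_sub.
by rewrite -{1}[G](row_perm1 G) -(mulVg s) row_permM row_permE code_mulmx_sub.
Qed.

Lemma code_col_perm m n (s : 'S_n) (G : 'M[Z4]_(m, n)) :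
  code (col_perm s G) = col_perm s @: code G.
Proof.
apply/setP=> x; rewrite inE; apply/existsP/imsetP => [[v /eqP->]|[y]].
  by exists (v *m G); rewrite ?col_permE ?mulmxA // inE; apply/existsP; exists v.
by rewrite inE => /existsP[v /eqP->] ->; exists v; rewrite !col_permE mulmxA.
Qed.

Lemma equiv_code_col_perm m n (s : 'S_n) (G : 'M[Z4]_(m, n)) :
  equiv_code (code G) (code (col_perm s G)).
Proof.
exists s, (fun=> false); rewrite code_col_perm.
by apply: eq_imset => x; apply/rowP=> j; rewrite !mxE mul1r.
Qed.

Definition lblock_fun m n (p : 'S_m) (j : 'I_(m + n)) : 'I_(m + n) :=
  unsplit (match split j with inl a => inl (p a) | inr b => inr b end).

Lemma lblock_fun_inj m n (p : 'S_m) : injective (@lblock_fun m n p).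
Proof.
move=> i j; rewrite /lblock_fun => /(can_inj unsplitK).
rewrite -(splitK i) -(splitK j) !unsplitK.
case: (split i) => [a|a]; case: (split j) => [b|b] //= [] e.
- by rewrite (perm_inj e).
- by rewrite e.
Qed.

Definition lblock_perm m n (p : 'S_m) : 'S_(m + n) := perm (@lblock_fun_inj m n p).

Lemma lblock_perm_lshift m n (p : 'S_m) a :
  lblock_perm n p (lshift n a) = lshift n (p a).
Proof. by rewrite permE /lblock_fun (unsplitK (inl _)). Qed.

Lemma lblock_perm_rshift m n (p : 'S_m) a :
  lblock_perm n p (rshift m a) = rshift m a.
Proof. by rewrite permE /lblock_fun (unsplitK (inr _)). Qed.

Lemma GABD_row_perm k1 k2 l (A : 'M[Z4]_(k1, k2)) (B : 'M[Z4]_(k1, l))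
    (D : 'M[Z4]_(k2, l)) (p : 'S_k1) (q := lblock_perm k2 p) :
  GABD (row_perm p A) (row_perm p B) D =
  row_perm q (col_perm (lblock_perm l q) (GABD A B D)).
Proof.
apply/matrixP=> i j; rewrite [RHS]mxE [RHS]mxE /GABD -(splitK i) -(splitK j).
case: (split i) => a; case: (split j) => b /=;
  rewrite ?lblock_perm_lshift ?lblock_perm_rshift.
- rewrite -(splitK b); case: (split b) => c /=;
    rewrite ?lblock_perm_lshift ?lblock_perm_rshift.
  + by rewrite !block_mxEul !row_mxEl !mxE (inj_eq perm_inj).
  + by rewrite !block_mxEul !row_mxEr !mxE.
- by rewrite !block_mxEur !mxE.
- rewrite -(splitK b); case: (split b) => c /=;
    rewrite ?lblock_perm_lshift ?lblock_perm_rshift.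
  + by rewrite !block_mxEdl !row_mxEl !mxE.
  + by rewrite !block_mxEdl !row_mxEr.
- by rewrite !block_mxEdr.
Qed.

Theorem mainTheorem9 (k1 k2 l : nat)
  (A : 'M[Z4]_(k1, k2)) (B : 'M[Z4]_(k1, l)) (D : 'M[Z4]_(k2, l)) :
  is01 A -> is01 D ->
  exists (A' : 'M[Z4]_(k1, k2)) (B' : 'M[Z4]_(k1, l)) (D' : 'M[Z4]_(k2, l)),
    [/\ is01 A', is01 D', P_row A' &
        equiv_code (code (GABD A B D)) (code (GABD A' B' D'))].
Proof.
move=> A01 D01; have [p A_sorted] := sort_rows A.
exists (row_perm p A), (row_perm p B), D; split; rewrite ?is01_row_perm //.
by rewrite GABD_row_perm code_row_perm; apply: equiv_code_col_perm.
Qed.
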